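(* For every variety $\mathbf{V}$ of finite monoids, the class $\mathbf{M}_e\mathbf{V}=\{M \text{ finite monoid}: eM_ee\in\mathbf{V}\text{ for all idempotents } e\in M\}$ is a variety of finite monoids.
   Context: A variety of finite monoids is a class of finite monoids closed under finite direct products, submonoids and quotients (homomorphic images). For a finite monoid $M$, write $m_1\le_{\mathcal J}m_2$ if $m_1=sm_2t$ for some $s,t\in M$. An idempotent is $e\in M$ with $e^2=e$. For an idempotent $e$, $M_e$ denotes the submonoid of $M$ generated by all elements $m$ with $e\le_{\mathcal J}m$, and $eM_ee=\{ese: s\in M_e\}$, which is a monoid with identity $e$. *)

From mathcomp Require Import all_boot.
Set Implicit Arguments. Unset Strict Implicit. Unset Printing Implicit Defensive.

Record finMonoid := FinMonoid {
  carrier :> finType;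
  mmul : carrier -> carrier -> carrier;
  mone : carrier;
  mmulA : forall x y z, mmul x (mmul y z) = mmul (mmul x y) z;
  mmul1m : forall x, mmul mone x = x;
  mmulm1 : forall x, mmul x mone = x }.

Arguments mmul {_}.
Arguments mone {_}.

Definition is_mhom (M N : finMonoid) (f : M -> N) :=
  f mone = mone /\ forall x y, f (mmul x y) = mmul (f x) (f y).

Section Prod.
Variables M N : finMonoid.
Definition pmul (a b : M * N) : M * N := (mmul a.1 b.1, mmul a.2 b.2).
Lemma pmulA x y z : pmul x (pmul y z) = pmul (pmul x y) z.
Proof. by rewrite /pmul /= !mmulA. Qed.
Lemma pmul1m x : pmul (mone, mone) x = x.
Proof. by case: x => a b; rewrite /pmul /= !mmul1m. Qed.
Lemma pmulm1 x : pmul x (mone, mone) = x.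
Proof. by case: x => a b; rewrite /pmul /= !mmulm1. Qed.
Definition prodMonoid : finMonoid :=
  @FinMonoid (M * N)%type pmul (mone, mone) pmulA pmul1m pmulm1.
End Prod.

Lemma unit_eq (x : unit) : tt = x. Proof. by case: x. Qed.
Definition trivMonoid : finMonoid :=
  @FinMonoid unit (fun _ _ => tt) tt (fun _ _ _ => erefl) unit_eq unit_eq.

Definition is_submonoid (M : finMonoid) (S : {set M}) :=
  (mone \in S) && [forall x in S, forall y in S, mmul x y \in S].

Section SubMonoid.
Variables (M : finMonoid) (S : {set M}) (HS : is_submonoid S).
Lemma sub_one : mone \in S. Proof. by case/andP: HS. Qed.
Lemma sub_mul x y : x \in S -> y \in S -> mmul x y \in S.
Proof. by case/andP: HS => _ /forall_inP H xS yS; move/forall_inP: (H x xS) => /(_ y yS). Qed.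
Definition smul (a b : {x | x \in S}) : {x | x \in S} :=
  exist _ (mmul (sval a) (sval b)) (sub_mul (svalP a) (svalP b)).
Definition sone : {x | x \in S} := exist _ mone sub_one.
Lemma smulA x y z : smul x (smul y z) = smul (smul x y) z.
Proof. by apply: val_inj; rewrite /= mmulA. Qed.
Lemma smul1m x : smul sone x = x. Proof. by apply: val_inj; rewrite /= mmul1m. Qed.
Lemma smulm1 x : smul x sone = x. Proof. by apply: val_inj; rewrite /= mmulm1. Qed.
Definition subMonoid : finMonoid :=
  @FinMonoid {x | x \in S} smul sone smulA smul1m smulm1.
End SubMonoid.

(** A variety of finite monoids: a class of finite monoids closed under
    finite direct products (the trivial monoid and binary products),
    submonoids, and quotients (homomorphic images). *)
Definition variety (V : finMonoid -> Prop) : Prop :=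
  [/\ V trivMonoid,
      (forall M N : finMonoid, V M -> V N -> V (prodMonoid M N)),
      (forall (M : finMonoid) (S : {set M}) (HS : is_submonoid S),
          V M -> V (subMonoid HS)) &
      (forall (M N : finMonoid) (f : M -> N),
          is_mhom f -> (forall y : N, exists x : M, f x = y) -> V M -> V N)].

Definition leJ (M : finMonoid) (m1 m2 : M) : bool :=
  [exists s : M, exists t : M, m1 == mmul s (mmul m2 t)].

Definition idempotent (M : finMonoid) (e : M) : bool := mmul e e == e.

Definition Me (M : finMonoid) (e : M) : {set M} :=
  [set x | [forall S : {set M},
     (is_submonoid S && [forall m, leJ e m ==> (m \in S)]) ==> (x \in S)]].

Definition eMee (M : finMonoid) (e : M) : {set M} :=
  [set mmul e (mmul s e) | s in Me e].

Section LocalMonoid.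
Variables (M : finMonoid) (e : M) (He : idempotent e).

Lemma Me_sub : is_submonoid (Me e).
Proof.
apply/andP; split.
  by rewrite inE; apply/forallP => S; apply/implyP => /andP [/andP [] ].
apply/forall_inP => x; rewrite inE => /forallP Hx.
apply/forall_inP => y; rewrite inE => /forallP Hy.
rewrite inE; apply/forallP => S; apply/implyP => HS.
have [HS1 _] := andP HS.
have := (implyP (Hx S) HS); have := (implyP (Hy S) HS).
case/andP: HS1 => _ /forall_inP H yS xS.
by move/forall_inP: (H x xS) => /(_ y yS).
Qed.

Lemma e_Me : e \in Me e.
Proof.
rewrite inE; apply/forallP => S; apply/implyP => /andP [_ /forallP H].
apply: (implyP (H e)); apply/existsP; exists mone; apply/existsP; exists mone.
by rewrite mmul1m mmulm1.
Qed.

Lemma eMee_e : e \in eMee e.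
Proof.
apply/imsetP; exists e; first exact: e_Me.
by rewrite !(eqP He).
Qed.

Lemma eMee_mul x y : x \in eMee e -> y \in eMee e -> mmul x y \in eMee e.
Proof.
case/imsetP => s sM -> /imsetP [t tM ->].
apply/imsetP; exists (mmul s (mmul e t)).
  by apply: (sub_mul Me_sub) => //; apply: (sub_mul Me_sub) => //; exact: e_Me.
by rewrite -!mmulA (mmulA e e) (eqP He).
Qed.

Definition lmul (a b : {x | x \in eMee e}) : {x | x \in eMee e} :=
  exist _ (mmul (sval a) (sval b)) (eMee_mul (svalP a) (svalP b)).
Definition lone : {x | x \in eMee e} := exist _ e eMee_e.
Lemma lmulA x y z : lmul x (lmul y z) = lmul (lmul x y) z.
Proof. by apply: val_inj; rewrite /= mmulA. Qed.
Lemma lmul1m x : lmul lone x = x.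
Proof.
apply: val_inj; case: x => x /= /imsetP [s _ ->].
by rewrite !mmulA (eqP He).
Qed.
Lemma lmulm1 x : lmul x lone = x.
Proof.
apply: val_inj; case: x => x /= /imsetP [s _ ->].
by rewrite -!mmulA (eqP He).
Qed.

Definition localMonoid : finMonoid :=
  @FinMonoid {x | x \in eMee e} lmul lone lmulA lmul1m lmulm1.
End LocalMonoid.

Definition MeV (V : finMonoid -> Prop) (M : finMonoid) : Prop :=
  forall (e : M) (He : idempotent e), V (localMonoid He).

From mathcomp Require Import all_boot.
Set Implicit Arguments. Unset Strict Implicit. Unset Printing Implicit Defensive.

(* A homomorphism f : M -> N maps M_e into M_(f e), hence induces a
   homomorphism eM_ee -> (f e)N_(f e)(f e); when f is injective, so is the
   induced map.  This settles submonoids (f the inclusion) and products (f the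
   pair of projections, jointly injective into the product of the local
   monoids).  For a surjection f and an idempotent e' of N, the fibre of e' is
   a finite subsemigroup of M; it contains an idempotent e lying J-below the
   whole fibre, so every generator of N_e' lifts to a generator of M_e, which
   makes the induced map eM_ee -> e'N_e'e' surjective. *)

Section Monoid.
Variable M : finMonoid.
Implicit Types a b c e s t x y : M.

Lemma leJP a b : reflect (exists s t, a = mmul s (mmul b t)) (leJ a b).
Proof.
apply: (iffP existsP) => [[s /existsP [t /eqP E]]|[s [t E]]]; first by exists s, t.
by exists s; apply/existsP; exists t; rewrite E.
Qed.

Lemma leJ_trans a b c : leJ a b -> leJ b c -> leJ a c.
Proof.
move=> /leJP [s [t ->]] /leJP [s' [t' ->]]; apply/leJP.
by exists (mmul s s'), (mmul t' t); rewrite -!mmulA.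
Qed.

Lemma leJ_mul s (m : M) t : leJ (mmul s (mmul m t)) m.
Proof. by apply/leJP; exists s, t. Qed.

Lemma leJ_mulr a b : leJ (mmul a b) a.
Proof. by have := leJ_mul mone a b; rewrite mmul1m. Qed.

Lemma leJ_mull a b : leJ (mmul a b) b.
Proof. by have := leJ_mul a b mone; rewrite mmulm1. Qed.

Lemma Me_gen e (m : M) : leJ e m -> m \in Me e.
Proof.
move=> em; rewrite inE; apply/forallP => S; apply/implyP => /andP [_ /forallP H].
exact: (implyP (H m) em).
Qed.

Lemma Me_one e : mone \in Me e.
Proof. exact: (sub_one (Me_sub e)). Qed.

Lemma Me_mul e x y : x \in Me e -> y \in Me e -> mmul x y \in Me e.
Proof. exact: (sub_mul (Me_sub e)). Qed.

Lemma Me_ind e (P : pred M) :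
  P mone -> (forall x y, P x -> P y -> P (mmul x y)) ->
  (forall m, leJ e m -> P m) -> {in Me e, forall x, P x}.
Proof.
move=> P1 PM Pgen x; rewrite inE => /forallP /(_ [set y | P y]) /implyP.
rewrite inE; apply; apply/andP; split.
  apply/andP; split; first by rewrite inE.
  by apply/forall_inP => y; rewrite inE => Py; apply/forall_inP => z; rewrite !inE; exact: PM.
by apply/forallP => m; apply/implyP; rewrite inE; exact: Pgen.
Qed.

Definition mpow a n := iter n (mmul a) mone.

Lemma mpowD a m n : mpow a (m + n) = mmul (mpow a m) (mpow a n).
Proof. by elim: m => [|m IH] /=; rewrite ?mmul1m // -/(mpow a (m + n)) IH mmulA. Qed.

Lemma mpow_periodic a : exists i d, 0 < d /\ mpow a (i + d) = mpow a i.
Proof.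
have : ~~ injectiveb (fun i : 'I_#|M|.+1 => mpow a i).
  by apply/negP => /injectiveP /leq_card; rewrite card_ord ltnn.
case/injectivePn => i [j neq_ij E]; case: (ltngtP i j) => [lt_ij|lt_ji|/val_inj eq_ij].
- by exists i, (j - i); rewrite subn_gt0 subnKC ?E // ltnW.
- by exists j, (i - j); rewrite subn_gt0 subnKC ?E // ltnW.
- by rewrite eq_ij eqxx in neq_ij.
Qed.

Lemma mpow_idempotent a : exists2 k, 0 < k & idempotent (mpow a k).
Proof.
have [i [d [d_gt0 Ed]]] := mpow_periodic a.
have step m : i <= m -> mpow a (m + d) = mpow a m.
  by move=> le_im; rewrite -(subnKC le_im) addnAC mpowD Ed -mpowD.
have period m n : i <= m -> mpow a (m + n * d) = mpow a m.
  move=> le_im; elim: n => [|n IH]; first by rewrite addn0.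
  by rewrite mulSnr addnA step ?IH // (leq_trans le_im) ?leq_addr.
exists (i.+1 * d); first by rewrite muln_gt0.
by rewrite /idempotent -mpowD period // (leq_trans (leqnSn i)) ?leq_pmulr.
Qed.

Lemma subsemigroup_idempotent_below (T : {set M}) x0 : x0 \in T ->
  (forall x y, x \in T -> y \in T -> mmul x y \in T) ->
  exists e, [/\ e \in T, idempotent e & {in T, forall x, leJ e x}].
Proof.
move=> x0T mulT; pose p := foldr mmul x0 (enum T).
have pT : p \in T.
  rewrite /p; have : all [in T] (enum T) by apply/allP => x; rewrite mem_enum.
  by elim: (enum T) => //= y r IH /andP [yT /IH]; exact: mulT.
have pJ : {in T, forall x, leJ p x}.
  move=> x; rewrite -mem_enum /p; elim: (enum T) => //= y r IH.
  rewrite in_cons => /orP [/eqP -> | /IH]; first exact: leJ_mulr.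
  exact/leJ_trans/leJ_mull.
have [[|k] // _ idem_pk] := mpow_idempotent p.
exists (mpow p k.+1); split=> //.
  by elim: k {idem_pk} => [|k IH]; [rewrite /mpow /= mmulm1 | exact: mulT].
by move=> x /pJ; exact/leJ_trans/leJ_mulr.
Qed.
End Monoid.

Section Homomorphism.
Variables (M N : finMonoid) (f : M -> N).
Hypothesis fh : is_mhom f.

Let f1 : f mone = mone. Proof. by case: fh. Qed.
Let fM x y : f (mmul x y) = mmul (f x) (f y). Proof. by case: fh. Qed.

Lemma leJ_mhom (a b : M) : leJ a b -> leJ (f a) (f b).
Proof. by case/leJP=> s [t ->]; rewrite !fM; exact: leJ_mul. Qed.

Lemma idempotent_mhom (e : M) : idempotent e -> idempotent (f e).
Proof. by move/eqP=> ee; apply/eqP; rewrite -fM ee. Qed.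

Lemma Me_mhom (e : M) : {in Me e, forall x, f x \in Me (f e)}.
Proof.
apply: Me_ind => [|x y|m /leJ_mhom /Me_gen //]; first by rewrite f1 Me_one.
by rewrite fM; exact: Me_mul.
Qed.

Lemma eMee_mhom (e x : M) : x \in eMee e -> f x \in eMee (f e).
Proof.
by case/imsetP=> s sMe ->; apply/imsetP; exists (f s); rewrite ?Me_mhom ?fM.
Qed.

Lemma Me_mhom_onto (e : M) : (forall y, exists x, f x = y) ->
  (forall x, f x = f e -> leJ e x) -> {in Me (f e), forall y, y \in f @: Me e}.
Proof.
move=> fsurj e_below; apply: Me_ind => [|_ _ /imsetP [x xMe ->] /imsetP [y yMe ->]|].
- by apply/imsetP; exists mone; rewrite ?Me_one.
- by apply/imsetP; exists (mmul x y); rewrite ?Me_mul ?fM.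
move=> y /leJP [s [t E]].
have [s' fs'] := fsurj s; have [x fx] := fsurj y; have [t' ft'] := fsurj t.
apply/imsetP; exists x => //; apply/Me_gen/(leJ_trans _ (leJ_mul s' x t'))/e_below.
by rewrite !fM fs' fx ft' -E.
Qed.

Section LocalMap.
Variables (e : M) (He : idempotent e) (Hfe : idempotent (f e)).

Definition localMap (x : localMonoid He) : localMonoid Hfe :=
  exist _ (f (val x)) (eMee_mhom (valP x)).

Lemma localMap_mhom : is_mhom localMap.
Proof. by split=> [|x y]; apply: val_inj; rewrite /= ?fM. Qed.

Lemma localMap_inj : injective f -> injective localMap.
Proof. by move=> finj x y /(congr1 val) /finj /val_inj. Qed.

Lemma localMap_onto : (forall y, exists x, f x = y) ->
  (forall x, f x = f e -> leJ e x) -> forall y, exists x, localMap x = y.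
Proof.
move=> fsurj e_below y.
have /imsetP [_ /(Me_mhom_onto fsurj e_below) /imsetP [m mMe ->] Ey] := valP y.
have emeMee : mmul e (mmul m e) \in eMee e by apply/imsetP; exists m.
by exists (exist [in eMee e] _ emeMee); apply: val_inj; rewrite /= !fM Ey.
Qed.
End LocalMap.
End Homomorphism.

Lemma val_mhom (M : finMonoid) (S : {set M}) (HS : is_submonoid S) :
  is_mhom (fun x : subMonoid HS => val x).
Proof. by []. Qed.

Lemma fst_mhom (M N : finMonoid) : is_mhom (fun x : prodMonoid M N => x.1).
Proof. by []. Qed.

Lemma snd_mhom (M N : finMonoid) : is_mhom (fun x : prodMonoid M N => x.2).
Proof. by []. Qed.

Lemma pair_mhom (L M N : finMonoid) (f : L -> M) (g : L -> N) :
  is_mhom f -> is_mhom g -> is_mhom (fun x => (f x, g x) : prodMonoid M N).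
Proof. by move=> [f1 fM] [g1 gM]; split=> [|x y]; rewrite ?f1 ?g1 ?fM ?gM. Qed.

Section Variety.
Variables (V : finMonoid -> Prop) (HV : variety V).

Lemma variety_quo (M N : finMonoid) (f : M -> N) :
  is_mhom f -> (forall y, exists x, f x = y) -> V M -> V N.
Proof. by case: HV => _ _ _; exact. Qed.

Lemma variety_inj (M N : finMonoid) (g : N -> M) :
  is_mhom g -> injective g -> V M -> V N.
Proof.
move=> [g1 gM] ginj VM.
have HT : is_submonoid [set g y | y in N].
  apply/andP; split; first by apply/imsetP; exists mone.
  apply/forall_inP => _ /imsetP [x _ ->]; apply/forall_inP => _ /imsetP [y _ ->].
  by apply/imsetP; exists (mmul x y).
have VT : V (subMonoid HT) by case: HV => _ _ Vsub _; exact: Vsub.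
pose h (x : subMonoid HT) := odflt mone [pick y | g y == val x].
have ghK x : g (h x) = val x.
  rewrite /h; case: pickP => [y /eqP //|noy].
  by case/imsetP: (valP x) => y _ E; have := noy y; rewrite /= E eqxx.
apply: (variety_quo (f := h)) VT; first split.
- by apply: ginj; rewrite ghK g1.
- by move=> x y; apply: ginj; rewrite gM !ghK.
move=> y; have gyT : g y \in [set g y | y in N] by apply/imsetP; exists y.
by exists (exist [in [set g y | y in N]] _ gyT); apply: ginj; rewrite ghK.
Qed.

Lemma MeV_triv : MeV V trivMonoid.
Proof.
move=> e He; case: HV => Vtriv _ _ _.
apply: (@variety_quo trivMonoid (localMonoid He) (fun=> lone He)) Vtriv.
  by split=> // x y; apply: val_inj; case: (val _).
by move=> y; exists tt; apply: val_inj; case: (val _); case: (val _).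
Qed.

Lemma MeV_sub (M : finMonoid) (S : {set M}) (HS : is_submonoid S) :
  MeV V M -> MeV V (subMonoid HS).
Proof.
move=> VM e He; have Hve := idempotent_mhom (val_mhom HS) He.
apply: (variety_inj (localMap_mhom (val_mhom HS) He Hve)) (VM _ Hve).
exact/localMap_inj/val_inj.
Qed.

Lemma MeV_prod (M N : finMonoid) : MeV V M -> MeV V N -> MeV V (prodMonoid M N).
Proof.
move=> VM VN e He; case: HV => _ Vprod _ _.
have He1 := idempotent_mhom (@fst_mhom M N) He.
have He2 := idempotent_mhom (@snd_mhom M N) He.
pose pi1 := @localMap _ _ _ (@fst_mhom M N) e He He1.
pose pi2 := @localMap _ _ _ (@snd_mhom M N) e He He2.
apply: (@variety_inj (prodMonoid (localMonoid He1) (localMonoid He2)) _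
  (fun x => (pi1 x, pi2 x))) (Vprod _ _ (VM _ He1) (VN _ He2)).
  exact: pair_mhom (localMap_mhom _ _ _) (localMap_mhom _ _ _).
move=> x y E; apply: val_inj.
have /= E1 := congr1 (fun p => val p.1) E; have /= E2 := congr1 (fun p => val p.2) E.
by rewrite [val x]surjective_pairing E1 E2 -surjective_pairing.
Qed.

Lemma MeV_quo (M N : finMonoid) (f : M -> N) :
  is_mhom f -> (forall y, exists x, f x = y) -> MeV V M -> MeV V N.
Proof.
move=> fh fsurj VM e' He'; pose fibre := [set x | f x == e'].
have [x0 fx0] := fsurj e'; have x0_fibre : x0 \in fibre by rewrite inE fx0.
have fibre_mul x y : x \in fibre -> y \in fibre -> mmul x y \in fibre.
  rewrite !inE => /eqP fx /eqP fy; case: fh => _ ->.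
  by rewrite fx fy (eqP He').
have [e [eT He e_below]] := subsemigroup_idempotent_below x0_fibre fibre_mul.
move: eT; rewrite inE => /eqP fe; move: He'; rewrite -fe => He'.
apply: (variety_quo (localMap_mhom fh He He')) (VM _ He).
by apply: localMap_onto fsurj _ => x fx; apply: e_below; rewrite inE fx fe.
Qed.
End Variety.

Theorem proposition5 (V : finMonoid -> Prop) :
  variety V -> variety (MeV V).
Proof.
move=> HV; split.
- exact: MeV_triv.
- exact: MeV_prod.
- exact: MeV_sub.
- exact: MeV_quo.
Qed.
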